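(* Let $\mathfrak I$ be a derivative-dependent value function. Then: (1) $\mathfrak I$ is unbiased; (2) $\mathfrak I$ satisfies (ModEC); (3) if $\mathfrak I$ is weakly chain-rule decomposable, then it is chain-rule decomposable; (4) if $\mathfrak I$ is weakly rank preserving, then it is rank preserving; (5) if $\mathfrak I$ satisfies (Dic) and (Dum), then it satisfies (Bound).
   Context: $X$ is a fixed finite set of variables. $\mathbb B(X)$ is the set of Boolean functions $\{0,1\}^X\to\{0,1\}$, combined pointwise by $\lor,\land$ (juxtaposition), $\oplus$, negation $\overline f$; a variable $x$ also denotes $\mathbf u\mapsto\mathbf u(x)$; $f\ge g$ is pointwise. $f_{x/c}$ is $f$ with $x$ fixed to $c$. $\mathrm{dep}(f)=\{x: f_{x/1}\ne f_{x/0}\}$; $f$ is monotone in $x$ if $f_{x/1}\ge f_{x/0}$. $f[x/s]=s f_{x/1}\lor\overline s f_{x/0}$; $\mathrm D_xf=f_{x/1}\oplus f_{x/0}$. Modularity: $f$ is modular in $g$ if $g$ is not constant and there are $\ell\in\mathbb B(X)$, $z\in X$ with $\mathrm{dep}(\ell)\cap\mathrm{dep}(g)=\emptyset$ and $f=\ell[z/g]$; monotonically modular if moreover $\ell$ is monotone in $z$. Then $f_{g/1}:=\ell_{z/1}$, $f_{g/0}:=\ell_{z/0}$ (well defined), and for a variable $w$, $f[g/w]:=w f_{g/1}\lor\overline w f_{g/0}$. A value function is a map $\mathfrak I:X\times\mathbb B(X)\to\mathbb R$. Properties (quantified over all $x,y\in X$, $f,g,h\in\mathbb B(X)$): (Bound)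 $0\le\mathfrak I_x(f)\le1$; (Dum) $\mathfrak I_x(f)=0$ if $x\notin\mathrm{dep}(f)$; (Dic) $\mathfrak I_x(x)=\mathfrak I_x(\overline x)=1$; (ModEC) $\mathfrak I_x(f)\ge\mathfrak I_x(h)$ whenever $f,h$ are monotonically modular in $g$, $f_{g/1}\ge h_{g/1}$, $h_{g/0}\ge f_{g/0}$, $x\in\mathrm{dep}(g)$; unbiased: $\mathfrak I_x(g)=\mathfrak I_x(\overline g)$; derivative dependent: $\mathrm D_xf\ge\mathrm D_xg\Rightarrow\mathfrak I_x(f)\ge\mathfrak I_x(g)$; rank preserving: for $f$ modular in $g$ and $x,y\in\mathrm{dep}(g)$, $\mathfrak I_x(g)\ge\mathfrak I_y(g)\Rightarrow\mathfrak I_x(f)\ge\mathfrak I_y(f)$; chain-rule decomposable: for $f$ modular in $g$ and $x\in\mathrm{dep}(g)$, $\mathfrak I_x(f)=\mathfrak I_x(g)\,\mathfrak I_{x_g}(f[g/x_g])$ for a variable $x_g\notin\mathrm{dep}(f)$. The weak variants require these only when $f$ is monotonically modular in $g$. *)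

From HB Require Import structures.
From mathcomp Require Import all_boot all_order all_algebra.
From mathcomp Require Import reals.
Set Implicit Arguments. Unset Strict Implicit. Unset Printing Implicit Defensive.
Import Order.TTheory GRing.Theory Num.Theory.

Section BoolFun.
Variable X : finType.

Definition assign := {ffun X -> bool}.
Definition BF := {ffun assign -> bool}.

Definition bvar (x : X) : BF := [ffun u : assign => u x].

Definition bneg (f : BF) : BF := [ffun u => ~~ f u].
Definition ble (g f : BF) : Prop := forall u : assign, g u ==> f u.

Definition upd (u : assign) (x : X) (c : bool) : assign :=
  [ffun y => if y == x then c else u y].

Definition restr (f : BF) (x : X) (c : bool) : BF := [ffun u => f (upd u x c)].

Definition dep (f : BF) : {set X} := [set x | restr f x true != restr f x false].

Definition monotone_in (f : BF) (x : X) : Prop := ble (restr f x false) (restr f x true).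

Definition subst (f : BF) (x : X) (s : BF) : BF :=
  [ffun u => (s u && restr f x true u) || (~~ s u && restr f x false u)].

Definition deriv (x : X) (f : BF) : BF :=
  [ffun u => restr f x true u (+) restr f x false u].

Definition nonconstant (g : BF) : Prop := exists u v : assign, g u != g v.

Definition modular_wit (f g l : BF) (z : X) : Prop :=
  nonconstant g /\ [disjoint dep l & dep g] /\ f = subst l z g.

Definition mmodular_wit (f g l : BF) (z : X) : Prop :=
  modular_wit f g l z /\ monotone_in l z.

Definition modular (f g : BF) : Prop := exists l z, modular_wit f g l z.
Definition mmodular (f g : BF) : Prop := exists l z, mmodular_wit f g l z.

(* For a witness (l, z): f_{g/c} := l_{z/c}, and f[g/w] := w f_{g/1} \/ ~w f_{g/0},
   which is literally subst l z (bvar w). *)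
Definition gcof (l : BF) (z : X) (c : bool) : BF := restr l z c.
Definition gsubst (l : BF) (z : X) (w : X) : BF :=
  [ffun u => (bvar w u && gcof l z true u) || (~~ bvar w u && gcof l z false u)].

End BoolFun.

Local Open Scope ring_scope.
Section ValueFunctions.
Variables (R : realType) (X : finType).

Definition valuefun := X -> BF X -> R.

Variable I : valuefun.

Definition Bound : Prop := forall x f, 0 <= I x f <= 1.
Definition Dum : Prop := forall x f, x \notin dep f -> I x f = 0.
Definition Dic : Prop := forall x, I x (bvar x) = 1 /\ I x (bneg (bvar x)) = 1.

Definition ModEC : Prop :=
  forall (x : X) (f h g lf lh : BF X) (zf zh : X),
    mmodular_wit f g lf zf -> mmodular_wit h g lh zh ->
    ble (gcof lh zh true) (gcof lf zf true) ->
    ble (gcof lf zf false) (gcof lh zh false) ->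
    x \in dep g -> I x h <= I x f.

Definition unbiased : Prop := forall x g, I x g = I x (bneg g).

Definition derivative_dependent : Prop :=
  forall x f g, ble (deriv x g) (deriv x f) -> I x g <= I x f.

Definition rank_preserving : Prop :=
  forall f g x y, modular f g -> x \in dep g -> y \in dep g ->
    I y g <= I x g -> I y f <= I x f.

Definition weakly_rank_preserving : Prop :=
  forall f g x y, mmodular f g -> x \in dep g -> y \in dep g ->
    I y g <= I x g -> I y f <= I x f.

Definition chain_rule_decomposable : Prop :=
  forall (f g l : BF X) (z x xg : X), modular_wit f g l z -> x \in dep g ->
    xg \notin dep f -> I x f = I x g * I xg (gsubst l z xg).

Definition weakly_chain_rule_decomposable : Prop :=
  forall (f g l : BF X) (z x xg : X), mmodular_wit f g l z -> x \in dep g ->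
    xg \notin dep f -> I x f = I x g * I xg (gsubst l z xg).

End ValueFunctions.

From Pilot Require Import Defs.
From mathcomp Require Import all_boot all_order all_algebra reals.
Import Order.TTheory GRing.Theory Num.Theory.
Local Open Scope ring_scope.
Set Implicit Arguments. Unset Strict Implicit.

(* A derivative-dependent value function I_x(f) depends only on
   the derivative D_x f, so each item reduces to a statement about derivatives.
   The key formula is the chain rule for Boolean derivatives of a substitution:
   if x is not a dependency of the cofactors l_{z/0}, l_{z/1}, then
       D_x (l[z/g]) = D_x g /\ D_z l.                        (deriv_subst)
   (1) holds since D_x(~g) = D_x g, (2) since monotonicity in z and the cofactor
   ordering give D_z lh <= D_z lf, and (5) since D_x 0 <= D_x f <= D_x x.
   For (3) and (4) every modular decomposition f = l[z/g] is replaced by the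
   monotone one f' = m[z/g] with m := z /\ D_z l: as D_z m = D_z l, the formula
   gives D_x f' = D_x f for the relevant x, so I cannot tell f and f' apart and
   the weak axiom applied to f' yields the strong one for f.  The only delicate
   point is that a cofactor l_{z/c} depends on no variable outside dep f
   (dep_cofactor_sub), which makes the formula applicable to the fresh x_g. *)

Section BooleanFunctions.
Variable X : finType.
Implicit Types (f g h l : BF X) (u v w : assign X) (x y z : X) (b c : bool).

Lemma updE u x c y : upd u x c y = if y == x then c else u y.
Proof. by rewrite ffunE. Qed.

Lemma upd_upd u x b c : upd (upd u x b) x c = upd u x c.
Proof. by apply/ffunP => y; rewrite !updE; case: (y == x). Qed.

Lemma updC u x y b c : x != y -> upd (upd u x b) y c = upd (upd u y c) x b.
Proof.
move=> nxy; apply/ffunP => w; rewrite !updE.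
by case: (eqVneq w x) => [->|//]; rewrite (negbTE nxy).
Qed.

Lemma upd_id u x : upd u x (u x) = u.
Proof. by apply/ffunP => y; rewrite updE; case: eqP => // ->. Qed.

Lemma restrE f x c u : restr f x c u = f (upd u x c).
Proof. by rewrite ffunE. Qed.

Lemma restr_upd f x c u b : restr f x c (upd u x b) = restr f x c u.
Proof. by rewrite !restrE upd_upd. Qed.

Lemma deriv_cofactors x f u :
  Defs.deriv x f u = restr f x true u (+) restr f x false u.
Proof. by rewrite ffunE. Qed.

Lemma notin_depP x f : reflect (forall u, Defs.deriv x f u = false) (x \notin dep f).
Proof.
rewrite inE negbK; apply: (iffP eqP) => [E u | D].
  by rewrite deriv_cofactors E addbb.
apply/ffunP => u; have := D u; rewrite deriv_cofactors.
by case: (restr f x true u); case: (restr f x false u).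
Qed.

Lemma notin_dep_upd f x : x \notin dep f -> forall u b, f (upd u x b) = f u.
Proof.
rewrite inE negbK => /eqP E u b.
have Eu w : f (upd w x true) = f (upd w x false) by rewrite -!restrE E.
by rewrite -{2}(upd_id u x); case: b; case: (u x); rewrite ?Eu.
Qed.

Lemma upd_notin_dep f x : (forall u b, f (upd u x b) = f u) -> x \notin dep f.
Proof. by move=> H; apply/notin_depP => u; rewrite deriv_cofactors !restrE !H addbb. Qed.

Lemma notin_dep_restr l z c y : y \notin dep l -> y \notin dep (restr l z c).
Proof.
move=> yl; apply: upd_notin_dep => u b; rewrite !restrE.
have [->|yz] := eqVneq y z; first by rewrite upd_upd.
by rewrite updC // notin_dep_upd.
Qed.

Lemma deriv_bvar x u : Defs.deriv x (bvar x) u.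
Proof. by rewrite deriv_cofactors !restrE !ffunE eqxx. Qed.

Lemma eq_on_dep g (P : pred X) u v : (forall y, ~~ P y -> u y = v y) ->
  (forall y, P y -> y \notin dep g) -> g u = g v.
Proof.
move=> Euv Pdep.
have Es y : y \notin enum P -> u y = v y by rewrite mem_enum; apply: Euv.
have sdep y : y \in enum P -> y \notin dep g by rewrite mem_enum; apply: Pdep.
clear Euv Pdep; elim: (enum P) u Es sdep => [|a s IH] u Es sdep.
  by suff -> : u = v by []; apply/ffunP => y; apply: Es.
rewrite -(notin_dep_upd (sdep a (mem_head _ _)) u (v a)); apply: IH.
  move=> y; rewrite updE; have [->//|ya ys] := eqVneq y a.
  by apply: Es; rewrite inE negb_or ya ys.
by move=> y ys; apply: sdep; rewrite inE ys orbT.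
Qed.

Lemma substE l z g u :
  subst l z g u = (g u && restr l z true u) || (~~ g u && restr l z false u).
Proof. by rewrite ffunE. Qed.

Lemma deriv_subst l z g x u :
  x \notin dep (restr l z true) -> x \notin dep (restr l z false) ->
  Defs.deriv x (subst l z g) u = Defs.deriv x g u && Defs.deriv z l u.
Proof.
move=> x1 x0; rewrite !deriv_cofactors !(restrE _ x) !substE.
rewrite !(notin_dep_upd x1) !(notin_dep_upd x0).
by case: (g _); case: (g _); case: (restr l z true u); case: (restr l z false u).
Qed.

Lemma dep_cofactor_disj f g l z x c :
  modular_wit f g l z -> x \in dep g -> x \notin dep (restr l z c).
Proof. by case=> _ [D _] xg; apply/notin_dep_restr; rewrite (disjointFl D xg). Qed.

(* Every dependency of a cofactor l_{z/c} is a dependency of f = l[z/g]: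
   pinning the variables of g to a point v with g v = c turns f into l_{z/c}. *)
Lemma dep_cofactor_sub f g l z y c :
  modular_wit f g l z -> y \notin dep f -> y \notin dep (restr l z c).
Proof.
move=> M yf; have [[p [q npq]] [D Ef]] := M.
have [yg|yg] := boolP (y \in dep g); first exact: dep_cofactor_disj _ M yg.
have [v gv] : exists v, g v = c.
  have [gp|gp] := eqVneq (g p) c; first by exists p.
  by exists q; move: npq gp; case: (g p); case: (g q); case: c.
pose pin w := [ffun y' => if y' \in dep g then v y' else w y'].
have pin_cof w : f (pin w) = restr l z c w.
  have -> : restr l z c w = restr l z c (pin w).
    apply: (eq_on_dep (P := fun y' => y' \in dep g)) => [y' /negbTE y'g | y' y'g].
      by rewrite ffunE y'g.
    exact: dep_cofactor_disj _ M y'g.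
  rewrite Ef substE; have -> : g (pin w) = c.
    rewrite -gv; apply: (eq_on_dep (P := fun y' => y' \notin dep g)) => // y'.
    by rewrite negbK ffunE => ->.
  by case: (c); rewrite ?orbF.
have pin_upd w b : pin (upd w y b) = upd (pin w) y b.
  by apply/ffunP => y'; rewrite !ffunE; case: eqP => // ->; rewrite (negbTE yg).
by apply: upd_notin_dep => w b; rewrite -!pin_cof pin_upd notin_dep_upd.
Qed.

Lemma deriv_le_monotone lf lh (zf zh : X) :
  monotone_in lf zf -> monotone_in lh zh ->
  ble (gcof lh zh true) (gcof lf zf true) -> ble (gcof lf zf false) (gcof lh zh false) ->
  ble (Defs.deriv zh lh) (Defs.deriv zf lf).
Proof.
move=> Mf Mh H1 H0 u; rewrite !deriv_cofactors.
move: (Mf u) (Mh u) (H1 u) (H0 u); rewrite /gcof.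
by case: (restr lf zf true u); case: (restr lf zf false u);
   case: (restr lh zh true u); case: (restr lh zh false u).
Qed.

Definition monotonize l z : BF X := [ffun u : assign X => u z && Defs.deriv z l u].

Lemma monotonizeE l z u : monotonize l z u = u z && Defs.deriv z l u.
Proof. by rewrite ffunE. Qed.

Lemma deriv_upd l z u b : Defs.deriv z l (upd u z b) = Defs.deriv z l u.
Proof. by rewrite !deriv_cofactors !restr_upd. Qed.

Lemma monotonize_true l z : restr (monotonize l z) z true = Defs.deriv z l.
Proof. by apply/ffunP => u; rewrite restrE monotonizeE updE eqxx deriv_upd. Qed.

Lemma monotonize_false l z : restr (monotonize l z) z false = [ffun=> false].
Proof. by apply/ffunP => u; rewrite restrE monotonizeE updE eqxx [RHS]ffunE. Qed.

Lemma deriv_monotonize l z u : Defs.deriv z (monotonize l z) u = Defs.deriv z l u.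
Proof.
by rewrite [LHS]deriv_cofactors monotonize_true monotonize_false [X in _ (+) X]ffunE addbF.
Qed.

Lemma monotonize_monotone l z : monotone_in (monotonize l z) z.
Proof. by move=> u; rewrite monotonize_false ffunE. Qed.

Lemma notin_dep_monotonize l z y : y \notin dep l -> y \notin dep (monotonize l z).
Proof.
move=> yl; apply: upd_notin_dep => u b; rewrite !monotonizeE.
have [yz|yz] := eqVneq y z.
  by move: yl => /notin_depP D; rewrite -yz !D !andbF.
rewrite updE eq_sym (negbTE yz) !deriv_cofactors.
by rewrite !(notin_dep_upd (notin_dep_restr z _ yl)).
Qed.

Lemma monotonize_cofactor_free l z x c :
  x \notin dep (restr l z true) -> x \notin dep (restr l z false) ->
  x \notin dep (restr (monotonize l z) z c).
Proof.
move=> x1 x0; case: c; rewrite ?monotonize_true ?monotonize_false.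
  apply: upd_notin_dep => u b.
  by rewrite !deriv_cofactors !(notin_dep_upd x1) !(notin_dep_upd x0).
by apply: upd_notin_dep => u b; rewrite !ffunE.
Qed.

Lemma monotonize_wit f g l z :
  modular_wit f g l z -> mmodular_wit (subst (monotonize l z) z g) g (monotonize l z) z.
Proof.
case=> nc [D _]; split; last exact: monotonize_monotone.
split=> //; split=> //; apply: disjointWl D; apply/subsetP => y.
by apply: contraTT; apply: notin_dep_monotonize.
Qed.

Lemma deriv_subst_monotonize l z g x u :
  x \notin dep (restr l z true) -> x \notin dep (restr l z false) ->
  Defs.deriv x (subst (monotonize l z) z g) u = Defs.deriv x (subst l z g) u.
Proof.
move=> x1 x0; rewrite !deriv_subst ?monotonize_cofactor_free //.
by rewrite deriv_monotonize.
Qed.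

Lemma gsubst_subst l z (t : X) : gsubst l z t = subst l z (bvar t).
Proof. by []. Qed.

End BooleanFunctions.

Section DerivativeDependent.
Variables (R : realType) (X : finType) (I : valuefun R X).
Hypothesis DD : derivative_dependent I.

Lemma dd_eq x f g :
  (forall u, Defs.deriv x f u = Defs.deriv x g u) -> I x f = I x g.
Proof. by move=> E; apply/le_anti/andP; split; apply: DD => u; rewrite E implybb. Qed.

Lemma dd_monotonize f g l z x : modular_wit f g l z -> x \in dep g ->
  I x f = I x (subst (monotonize l z) z g).
Proof.
move=> M xg; apply: dd_eq => u; have [_ [_ ->]] := M.
by rewrite deriv_subst_monotonize //; apply: dep_cofactor_disj _ M xg.
Qed.

(* Negation does not change derivatives: D_x (~g) = D_x g. *)
Lemma dd_unbiased : unbiased I.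
Proof.
move=> x g; apply: dd_eq => u.
by rewrite !deriv_cofactors !restrE !ffunE; case: (g _); case: (g _).
Qed.

(* Monotone outer functions ordered cofactorwise have ordered derivatives. *)
Lemma dd_ModEC : ModEC I.
Proof.
move=> x f h g lf lh zf zh [Wf Mf] [Wh Mh] H1 H0 xg.
have free W c := dep_cofactor_disj c W xg.
have [_ [_ ->]] := Wf; have [_ [_ ->]] := Wh.
apply: DD => u; rewrite !deriv_subst ?(free _ _ _ Wf) ?(free _ _ _ Wh) //.
by have := deriv_le_monotone Mf Mh H1 H0 u; case: (Defs.deriv x g u).
Qed.

(* Apply the weak chain rule to the monotonized decomposition f' of f: the fresh
   x_g stays free in f', and f'[g/x_g] has the derivative D_z l = D_x_g f[g/x_g]. *)
Lemma dd_chain_rule : weakly_chain_rule_decomposable I -> chain_rule_decomposable I.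
Proof.
move=> W f g l z x xg M xdep xgf.
have xg1 := dep_cofactor_sub true M xgf; have xg0 := dep_cofactor_sub false M xgf.
have xgf' : xg \notin dep (subst (monotonize l z) z g).
  apply/notin_depP => u; rewrite deriv_subst_monotonize //.
  by have [_ [_ <-]] := M; move/notin_depP: xgf.
rewrite (dd_monotonize M xdep) (W _ _ _ _ _ _ (monotonize_wit M) xdep xgf').
congr (_ * _); apply: dd_eq => u.
by rewrite !gsubst_subst deriv_subst_monotonize.
Qed.

(* Transfer the ranking through the monotonized decomposition. *)
Lemma dd_rank_preserving : weakly_rank_preserving I -> rank_preserving I.
Proof.
move=> W f g x y [l [z M]] xg yg le_yx.
rewrite (dd_monotonize M xg) (dd_monotonize M yg).
by apply: W xg yg le_yx; exists (monotonize l z), z; apply: monotonize_wit M.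
Qed.

(* 0 = I_x(0) <= I_x(f) <= I_x(x) = 1, since D_x 0 <= D_x f <= D_x x. *)
Lemma dd_bound : Dic I -> Dum I -> Bound I.
Proof.
move=> Dic Dum x f; apply/andP; split.
  have I0 : I x [ffun=> false] = 0.
    by apply: Dum; apply/upd_notin_dep => u b; rewrite !ffunE.
  by rewrite -I0; apply: DD => u; rewrite deriv_cofactors !restrE !ffunE.
by rewrite -(Dic x).1; apply: DD => u; rewrite deriv_bvar implybT.
Qed.

End DerivativeDependent.

Theorem mainTheorem18 (R : realType) (X : finType) (I : valuefun R X) :
  derivative_dependent I ->
  [/\ unbiased I,
      ModEC I,
      (weakly_chain_rule_decomposable I -> chain_rule_decomposable I),
      (weakly_rank_preserving I -> rank_preserving I)
    & (Dic I -> Dum I -> Bound I)].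
Proof.
move=> DD; split.
- exact: dd_unbiased.
- exact: dd_ModEC.
- exact: dd_chain_rule.
- exact: dd_rank_preserving.
- exact: dd_bound.
Qed.
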